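(* Let $\iota_1\le\kappa_1$ and $\iota_2\le\kappa_2$ be natural numbers and let $(\iota,\kappa)=(\iota_1,\kappa_1)\wedge(\iota_2,\kappa_2)$. Then $L_{(\iota_1,\kappa_1)}\times L_{(\iota_2,\kappa_2)}\equiv_W L_{(\iota,\kappa)}$. In particular, with $L_{(0,2)}$ repeated $k\ge1$ times, the $k$-fold product $L_{(0,2)}\times\dots\times L_{(0,2)}$ is Wadge equivalent to $L_{(0,2k)}$.
   Context: For $\iota\le\kappa$, $L_{(\iota,\kappa)}\subseteq\{\iota,\dots,\kappa\}^\omega$ is the set of words in which the highest number occurring infinitely often is even. For word languages $L,M$, $L\times M=\{(x_1,y_1)(x_2,y_2)\cdots : x_1x_2\cdots\in L,\ y_1y_2\cdots\in M\}$ (words over the product alphabet). A pair $(i_1,i_2)\in\omega\times\omega$ is even if both $i_1,i_2$ are even, odd otherwise. Order $[\iota_1,\kappa_1]\times[\iota_2,\kappa_2]$ (where $[a,b]=\{a,\dots,b\}$) componentwise. For $m\in\{0,1\}$ and $n\ge m$, an alternating chain of type $(m,n)$ is a sequence $(x_m,y_m)<(x_{m+1},y_{m+1})<\dots<(x_n,y_n)$ (strict in the componentwise order) such that $(x_i,y_i)$ is even iff $i$ is even. $(\iota_1,\kappa_1)\wedge(\iota_2,\kappa_2)$ is the type of a longest alternating chain in $[\iota_1,\kappa_1]\times[\iota_2,\kappa_2]$ (this is well defined). $\equiv_W$ is mutual continuous reducibility between the Cantor-type spaces of infinite words. *)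

From mathcomp Require Import all_boot.
Set Implicit Arguments. Unset Strict Implicit. Unset Printing Implicit Defensive.

Definition word (A : Type) := nat -> A.

Definition continuous (A B : Type) (f : word A -> word B) : Prop :=
  forall (x : word A) (n : nat), exists m : nat, forall y : word A,
    (forall i, i < m -> y i = x i) -> forall i, i < n -> f y i = f x i.

Definition wadge_le (A B : Type) (L : word A -> Prop) (M : word B -> Prop) : Prop :=
  exists f : word A -> word B, continuous f /\ forall x, L x <-> M (f x).

Definition wadge_eq (A B : Type) (L : word A -> Prop) (M : word B -> Prop) : Prop :=
  wadge_le L M /\ wadge_le M L.

Definition letter (iota kappa : nat) := {x : nat | iota <= x <= kappa}.

Definition inf_often (iota kappa : nat) (x : word (letter iota kappa)) (m : nat) : Prop :=
  forall N, exists n, N <= n /\ val (x n) = m.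

Definition parityL (iota kappa : nat) (x : word (letter iota kappa)) : Prop :=
  exists m, inf_often x m /\ ~~ odd m /\
            (forall m', inf_often x m' -> m' <= m).

Definition prodL (A B : Type) (L : word A -> Prop) (M : word B -> Prop)
  (w : word (A * B)) : Prop :=
  L (fun n => (w n).1) /\ M (fun n => (w n).2).

Definition kprodL (A : Type) (k : nat) (L : word A -> Prop)
  (w : word {ffun 'I_k -> A}) : Prop :=
  forall j : 'I_k, L (fun n => w n j).

Definition even_pair (p : nat * nat) : bool := ~~ odd p.1 && ~~ odd p.2.

Definition pair_le (p q : nat * nat) : bool := (p.1 <= q.1) && (p.2 <= q.2).
Definition pair_lt (p q : nat * nat) : bool := pair_le p q && (p != q).

Definition alt_chain (i1 k1 i2 k2 m n : nat) (c : nat -> nat * nat) : Prop :=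
  m <= 1 /\ m <= n /\
  (forall i, m <= i <= n ->
     [/\ i1 <= (c i).1 <= k1, i2 <= (c i).2 <= k2 &
         even_pair (c i) = ~~ odd i]) /\
  (forall i, m <= i < n -> pair_lt (c i) (c i.+1)).

(* (m,n) = (i1,k1) /\ (i2,k2): the type of a longest alternating chain *)
Definition meet_type (i1 k1 i2 k2 m n : nat) : Prop :=
  (exists c, alt_chain i1 k1 i2 k2 m n c) /\
  (forall m' n' c', alt_chain i1 k1 i2 k2 m' n' c' -> n' - m' <= n - m).

From mathcomp Require Import all_boot.
From Stdlib Require Import Classical ClassicalEpsilon FunctionalExtensionality.
Set Implicit Arguments. Unset Strict Implicit.

(* A word over a product of K alphabets is read as K bounded sequences of
   numbers, its coordinates; the product language asks that every coordinate
   satisfy the parity condition, i.e. that its limsup be even.  Both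
   reductions come from order-theoretic data on the box of letter values:
   - a monotone rank r from the box to [m, n] with r v even iff all v j are
     even gives  product <= L_(m,n)  (rank_reduction).  The reduction outputs
     r applied to running maxima of the coordinates over a suitable window; the
     windows are chosen so that the limsup of the output is r applied to the
     coordinatewise limsups (window_limsup);
   - a monotone chain c from [m, n] into the box with c i all-even iff i is
     even gives  L_(m,n) <= product, letter by letter (chain_reduction).
   For two coordinates and (m, n) the meet type, the chain is a longest
   alternating chain and the rank of p is the largest top index of an
   alternating chain ending in p (meet_rank).  For k copies of [0, 2] the rank
   is twice the number of 2's, plus one if some coordinate is 1.  The two
   parts of the theorem are meet_product_equiv and kfold_product_equiv. *)

Definition io (s : nat -> nat) (m : nat) : Prop :=
  forall N, exists n, N <= n /\ s n = m.

(* The parity condition on a number sequence; [parityL x] unfolds to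
   [even_limsup (fun t => val (x t))]. *)
Definition even_limsup (s : nat -> nat) : Prop :=
  exists m, io s m /\ ~~ odd m /\ (forall m', io s m' -> m' <= m).

Definition eventually (P : nat -> Prop) : Prop :=
  exists T, forall t, T <= t -> P t.

Definition is_limsup (s : nat -> nat) (M : nat) : Prop :=
  io s M /\ eventually (fun t => s t <= M).

Lemma limsup_exists s b : eventually (fun t => s t <= b) -> exists M, is_limsup s M.
Proof.
elim: b => [|b IH] [T HT].
- exists 0; split; last by exists T.
  move=> N; exists (maxn N T); split; first exact: leq_maxl.
  by apply/eqP; rewrite -leqn0 HT // leq_maxr.
- case: (classic (io s b.+1)) => [io_b|not_io_b].
    by exists b.+1; split => //; exists T.
  have [N HN] : exists N, forall n, N <= n -> s n <> b.+1.
    apply: NNPP => H; apply: not_io_b => N.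
    apply: NNPP => H2; apply: H; exists N => n Hn E; apply: H2; by exists n.
  apply: IH; exists (maxn N T) => t Ht.
  have := HT t (leq_trans (leq_maxr _ _) Ht).
  rewrite leq_eqVlt => /orP[/eqP E|//].
  by case: (HN t (leq_trans (leq_maxl _ _) Ht)).
Qed.

Lemma limsup_of_bounded s b : (forall t, s t <= b) -> exists M, is_limsup s M.
Proof. by move=> Hb; apply: (@limsup_exists _ b); exists 0. Qed.

Lemma limsup_max s M m : is_limsup s M -> io s m -> m <= M.
Proof. by move=> [_ [T HT]] /(_ T) [n [Hn <-]]; exact: HT. Qed.

Lemma limsup_attained s M : is_limsup s M -> exists n, s n = M.
Proof. by move=> [/(_ 0) [n [_ E]] _]; exists n. Qed.

Lemma is_limsup_ext s s' M : (forall t, s t = s' t) -> is_limsup s M -> is_limsup s' M.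
Proof.
move=> E [io_M [T HT]]; split.
- by move=> N; have [t [Ht Et]] := io_M N; exists t; rewrite -E.
- by exists T => t Ht; rewrite -E; exact: HT.
Qed.

Lemma even_limsupE s M : is_limsup s M -> even_limsup s <-> ~~ odd M.
Proof.
move=> HM; split.
- move=> [m [io_m [ev_m m_max]]].
  suff -> : M = m by [].
  by apply/eqP; rewrite eqn_leq (limsup_max HM io_m) m_max //; case: HM.
- move=> ev_M; exists M; split; first by case: HM.
  by split => // m; exact: limsup_max.
Qed.

Lemma eventually_all (I : finType) (P : I -> nat -> Prop) :
  (forall j, eventually (P j)) -> eventually (fun t => forall j, P j t).
Proof.
move=> /fin_all_exists [T HT]; exists (\max_j T j) => t Ht j.
by apply: HT; exact: leq_trans (leq_bigmax j) Ht.
Qed.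

(* The last time u < t with P u, or 0 if there is none. *)
Fixpoint last_before (P : nat -> bool) (t : nat) : nat :=
  if t is t'.+1 then (if P t' then t' else last_before P t') else 0.

Lemma last_before_max (P : nat -> bool) u t : P u -> u < t -> u <= last_before P t.
Proof.
move=> Pu; elim: t => [|t IH] //; rewrite ltnS leq_eqVlt => /orP[/eqP<-|ut] /=.
- by rewrite Pu.
- by case: (P t); [exact: ltnW | exact: IH].
Qed.

Lemma last_beforeP (P : nat -> bool) t :
  last_before P t = 0 \/ (P (last_before P t) /\ last_before P t < t).
Proof.
elim: t => [|t IH] /=; first by left.
case E: (P t); first by right; rewrite E.
by case: IH => [->|[H1 H2]]; [left | right; split => //; exact: ltnW].
Qed.

Lemma last_before_le (P : nat -> bool) t : last_before P t <= t.
Proof. by case: (last_beforeP P t) => [->|[_ /ltnW]]. Qed.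

Lemma last_before_ext (P Q : nat -> bool) t :
  (forall u, u < t -> P u = Q u) -> last_before P t = last_before Q t.
Proof.
elim: t => [|t IH] //= H; rewrite H // IH // => u Hu; apply: H; exact: ltnW.
Qed.

Definition window_max (f : nat -> nat) (s t : nat) : nat := \max_(s <= u < t.+1) f u.

Lemma window_max_ge f s t u : s <= u <= t -> f u <= window_max f s t.
Proof. by move=> Hu; apply: leq_bigmax_seq; rewrite // mem_index_iota ltnS. Qed.

Lemma window_max_le f s t B :
  (forall u, s <= u <= t -> f u <= B) -> window_max f s t <= B.
Proof.
move=> Hf; apply/bigmax_leqP_seq => u; rewrite mem_index_iota ltnS => Hu _.
exact: Hf.
Qed.

Section Windows.
Variable K : nat.
Implicit Types a b : nat -> 'I_K -> nat.

Definition prev_high (f : nat -> nat) (t : nat) : nat :=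
  last_before (fun u => f t <= f u) t.

(* The window used at time t starts at the earliest of the prev_high times
   of the coordinates (written as t minus the longest lookback). *)
Definition window_start a t : nat :=
  t - \max_(j < K) (t - prev_high (fun u => a u j) t).

Definition windowed a t (j : 'I_K) : nat :=
  window_max (fun u => a u j) (window_start a t) t.

Lemma window_start_le a t : window_start a t <= t.
Proof. exact: leq_subr. Qed.

Lemma window_start_le_prev a t j : window_start a t <= prev_high (fun u => a u j) t.
Proof.
have H := @leq_bigmax _ (fun j => t - prev_high (fun u => a u j) t) j.
by apply: leq_trans (leq_sub2l t H) _; rewrite subKn // last_before_le.
Qed.

Lemma window_start_ge a t N :
  N <= t -> (forall j, N <= prev_high (fun u => a u j) t) -> N <= window_start a t.
Proof.
move=> Nt H; rewrite /window_start leq_subRL; last first.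
  by apply/bigmax_leqP => j _; exact: leq_subr.
by rewrite addnC -leq_subRL //; apply/bigmax_leqP => j _; apply: leq_sub2l.
Qed.

Lemma windowed_box a (lo hi : 'I_K -> nat) :
  (forall t j, lo j <= a t j <= hi j) -> forall t j, lo j <= windowed a t j <= hi j.
Proof.
move=> Hbox t j; case/andP: (Hbox t j) => lo_a _; apply/andP; split.
- by apply: leq_trans lo_a (window_max_ge _ _); rewrite window_start_le leqnn.
- by apply: window_max_le => u _; case/andP: (Hbox u j).
Qed.

Lemma windowed_causal a b t :
  (forall u, u <= t -> a u = b u) -> windowed a t = windowed b t.
Proof.
move=> Eab; apply: functional_extensionality => j; rewrite /windowed.
have -> : window_start a t = window_start b t.
  congr (t - _); apply: eq_bigr => i _; congr (t - _).
  by apply: last_before_ext => u Hu; rewrite !Eab // ltnW.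
by apply: eq_big_nat => u /andP[_]; rewrite ltnS => Hu; rewrite Eab.
Qed.

Section Limsup.
Variables (a : nat -> 'I_K -> nat) (M : 'I_K -> nat).
Hypothesis a_limsup : forall j, is_limsup (fun t => a t j) (M j).

Lemma eventually_below_limsup : eventually (fun t => forall j, a t j <= M j).
Proof. by apply: eventually_all => j; case: (a_limsup j). Qed.

(* The windows start arbitrarily late: a coordinate that has just attained
   its limsup is eventually never exceeded again. *)
Lemma window_start_unbounded N : eventually (fun t => N <= window_start a t).
Proof.
have [T0 HT0] := eventually_below_limsup.
have prev_late j : eventually (fun t => N <= prev_high (fun u => a u j) t).
  have [u [Hu Eu]] := (a_limsup j).1 (maxn N T0).
  exists (maxn u.+1 T0) => t Ht.
  apply: leq_trans (leq_trans (leq_maxl _ _) Hu) _.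
  apply: last_before_max; last exact: leq_trans (leq_maxl _ _) Ht.
  by rewrite Eu; apply: HT0; exact: leq_trans (leq_maxr _ _) Ht.
have [T HT] := eventually_all prev_late.
exists (maxn T N) => t Ht; apply: window_start_ge.
- exact: leq_trans (leq_maxr _ _) Ht.
- by apply: HT; exact: leq_trans (leq_maxl _ _) Ht.
Qed.

Lemma windowed_eventually_le : eventually (fun t => forall j, windowed a t j <= M j).
Proof.
have [T0 HT0] := eventually_below_limsup; have [T1 HT1] := window_start_unbounded T0.
exists T1 => t Ht j; apply: window_max_le => u /andP[Hu _].
by apply: HT0; exact: leq_trans (HT1 t Ht) Hu.
Qed.

(* Infinitely often, all windowed maxima reach the limsups at once: take t
   the latest of the first hitting times h j >= T of the limsups; the window
   at t reaches back before T, hence contains every h j. *)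
Lemma windowed_hits N : 0 < K -> exists t, N <= t /\ forall j, M j <= windowed a t j.
Proof.
move=> K_gt0; have [T0 HT0] := eventually_below_limsup.
pose T := maxn N (maxn T0 1).
have [NT T0T T_gt0] : [/\ N <= T, T0 <= T & 0 < T] by rewrite !leq_max !leqnn !orbT.
have hit j : exists u, (T <= u) && (a u j == M j).
  by have [u [Hu Eu]] := (a_limsup j).1 T; exists u; rewrite Hu Eu eqxx.
pose h j := ex_minn (hit j).
have h_hit j : T <= h j /\ a (h j) j = M j.
  by rewrite /h; case: ex_minnP => u /andP[H1 /eqP H2] _.
have h_first j u : T <= u -> a u j = M j -> h j <= u.
  by move=> H1 H2; rewrite /h; case: ex_minnP => v _; apply; rewrite H1 H2 eqxx.
have [j0 Ej0] := eq_bigmax h ltac:(by rewrite card_ord).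
set t := \max_j h j in Ej0.
have h_le_t j : h j <= t := leq_bigmax j.
have start_early : window_start a t < T.
  apply: leq_ltn_trans (window_start_le_prev a t j0) _; rewrite /prev_high.
  case: (last_beforeP (fun u => a t j0 <= a u j0) t) => [->//|[a_p p_lt_t]].
  rewrite ltnNge; apply/negP => T_le_p.
  have a_p_lim : a (last_before (fun u => a t j0 <= a u j0) t) j0 = M j0.
    apply/eqP; rewrite eqn_leq HT0 /=; last exact: leq_trans T0T T_le_p.
    by rewrite -(proj2 (h_hit j0)) -Ej0.
  by have := leq_ltn_trans (h_first _ _ T_le_p a_p_lim) p_lt_t; rewrite -Ej0 ltnn.
exists t; split; first exact: leq_trans NT (leq_trans (h_hit j0).1 (h_le_t j0)).
move=> j; rewrite -(h_hit j).2; apply: window_max_ge.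
by rewrite h_le_t andbT ltnW // (leq_trans start_early (h_hit j).1).
Qed.

Lemma window_limsup (lo hi : 'I_K -> nat) (r : ('I_K -> nat) -> nat) :
  0 < K -> (forall t j, lo j <= a t j <= hi j) ->
  (forall v v', (forall j, lo j <= v j <= hi j) -> (forall j, lo j <= v' j <= hi j) ->
     (forall j, v j <= v' j) -> r v <= r v') ->
  is_limsup (fun t => r (windowed a t)) (r M).
Proof.
move=> K_gt0 a_box r_mono.
have M_box j : lo j <= M j <= hi j.
  by have [u <-] := limsup_attained (a_limsup j); apply: a_box.
have w_box := windowed_box a_box.
have [T1 HT1] := windowed_eventually_le.
split; last by exists T1 => t Ht; apply: r_mono => //; exact: HT1.
move=> N; have [t [Ht HM]] := windowed_hits (maxn N T1) K_gt0.
exists t; split; first exact: leq_trans (leq_maxl _ _) Ht.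
have T1t : T1 <= t := leq_trans (leq_maxr _ _) Ht.
suff -> : windowed a t = M by [].
by apply: functional_extensionality => j; apply/eqP; rewrite eqn_leq HM HT1.
Qed.

End Limsup.
End Windows.

Lemma letter_low i k : i <= k -> i <= i <= k.
Proof. by move=> ik; rewrite leqnn ik. Qed.

Definition to_letter i k (ik : i <= k) (x : nat) : letter i k :=
  insubd (exist (fun x => i <= x <= k) i (letter_low ik)) x.

Lemma val_to_letter i k (ik : i <= k) x : i <= x <= k -> val (to_letter ik x) = x.
Proof. by move=> Hx; rewrite val_insubd Hx. Qed.

Section Reductions.
Variables (A : Type) (K : nat) (coord : A -> 'I_K -> nat).

Definition all_even_limsup (w : word A) : Prop :=
  forall j, even_limsup (fun t => coord (w t) j).

Lemma rank_reduction (lo hi : 'I_K -> nat) m n (mn : m <= n)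
    (r : ('I_K -> nat) -> nat) :
  0 < K ->
  (forall x j, lo j <= coord x j <= hi j) ->
  (forall v, (forall j, lo j <= v j <= hi j) -> m <= r v <= n) ->
  (forall v v', (forall j, lo j <= v j <= hi j) -> (forall j, lo j <= v' j <= hi j) ->
     (forall j, v j <= v' j) -> r v <= r v') ->
  (forall v, (forall j, lo j <= v j <= hi j) -> (~~ odd (r v) <-> forall j, ~~ odd (v j))) ->
  wadge_le all_even_limsup (@parityL m n).
Proof.
move=> K_gt0 coord_box r_range r_mono r_parity.
exists (fun w t => to_letter mn (r (windowed (fun u j => coord (w u) j) t))); split.
  move=> x N; exists N => y Hxy i Hi; congr (to_letter mn (r _)).
  by apply: windowed_causal => u Hu; rewrite Hxy // (leq_ltn_trans Hu Hi).
move=> w; set a := fun u j => coord (w u) j.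
have a_box t j : lo j <= a t j <= hi j by apply: coord_box.
have /fin_all_exists [M HM] j : exists M, is_limsup (fun t => a t j) M.
  by apply: (@limsup_of_bounded _ (hi j)) => t; case/andP: (a_box t j).
have M_box j : lo j <= M j <= hi j.
  by have [u <-] := limsup_attained (HM j); apply: a_box.
have out_limsup : is_limsup (fun t => val (to_letter mn (r (windowed a t)))) (r M).
  apply: is_limsup_ext (window_limsup HM K_gt0 a_box r_mono) => t.
  by rewrite val_to_letter // r_range // => j; apply: windowed_box.
change ((forall j, even_limsup (fun t => a t j)) <->
        even_limsup (fun t => val (to_letter mn (r (windowed a t))))).
rewrite (even_limsupE out_limsup) (r_parity M M_box).
by split => H j; apply/(even_limsupE (HM j)); apply: H.
Qed.

Lemma chain_reduction m n (c : nat -> A) :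
  (forall i i' j, m <= i -> i <= i' -> i' <= n -> coord (c i) j <= coord (c i') j) ->
  (forall i, m <= i <= n -> ((forall j, ~~ odd (coord (c i) j)) <-> ~~ odd i)) ->
  wadge_le (@parityL m n) all_even_limsup.
Proof.
move=> c_mono c_parity; exists (fun w t => c (val (w t))); split.
  by move=> x N; exists N => y Hxy i Hi; rewrite Hxy.
move=> w.
have [M HM] : exists M, is_limsup (fun t => val (w t)) M.
  by apply: (@limsup_of_bounded _ n) => t; case/andP: (valP (w t)).
have M_range : m <= M <= n by have [u <-] := limsup_attained HM; exact: valP (w u).
have coord_limsup j : is_limsup (fun t => coord (c (val (w t))) j) (coord (c M) j).
  split.
  - by move=> N; have [t [Ht <-]] := HM.1 N; exists t.
  - have [T HT] := HM.2; exists T => t Ht; case/andP: (valP (w t)) => mw _.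
    by apply: c_mono => //; [exact: HT | case/andP: M_range].
change (even_limsup (fun t => val (w t)) <->
        forall j, even_limsup (fun t => coord (c (val (w t))) j)).
rewrite (even_limsupE HM) -(c_parity M M_range).
by split => H j; apply/(even_limsupE (coord_limsup j)); apply: H.
Qed.

End Reductions.

Lemma pair_le_refl p : pair_le p p.
Proof. by rewrite /pair_le !leqnn. Qed.

Lemma pair_le_trans p q s : pair_le p q -> pair_le q s -> pair_le p s.
Proof.
by rewrite /pair_le => /andP[a b] /andP[c d]; rewrite (leq_trans a c) (leq_trans b d).
Qed.

Lemma pair_le_anti p q : pair_le p q -> pair_le q p -> p = q.
Proof.
case: p q => [a b] [c d]; rewrite /pair_le /= => /andP[ac bd] /andP[ca db].
by congr (_, _); apply/eqP; rewrite eqn_leq ?ac ?ca ?bd ?db.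
Qed.

Lemma pair_lt_le_trans p q s : pair_lt p q -> pair_le q s -> pair_lt p s.
Proof.
rewrite /pair_lt => /andP[pq p_neq_q] qs; rewrite (pair_le_trans pq qs) /=.
apply/eqP => E; subst s; move/negP: p_neq_q; apply; apply/eqP; exact: pair_le_anti.
Qed.

Lemma parity_change_lt p q : pair_le p q -> even_pair p != even_pair q -> pair_lt p q.
Proof. by move=> pq Hpar; rewrite /pair_lt pq /=; apply: contraNneq Hpar => ->. Qed.

Section MeetType.
Variables i1 k1 i2 k2 : nat.
Hypotheses (ik1 : i1 <= k1) (ik2 : i2 <= k2).

Definition in_box (p : nat * nat) : bool := (i1 <= p.1 <= k1) && (i2 <= p.2 <= k2).

Lemma bottom_in_box : in_box (i1, i2).
Proof. by rewrite /in_box /= leqnn ik1 leqnn ik2. Qed.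

Lemma bottom_le p : in_box p -> pair_le (i1, i2) p.
Proof. by case/andP => /andP[a _] /andP[b _]; rewrite /pair_le a b. Qed.

Lemma chain_mono m n c : alt_chain i1 k1 i2 k2 m n c ->
  forall i i', m <= i -> i <= i' -> i' <= n -> pair_le (c i) (c i').
Proof.
move=> [_ [_ [_ c_lt]]] i i' mi; elim: i' => [|i' IH].
  by rewrite leqn0 => /eqP -> _; exact: pair_le_refl.
rewrite leq_eqVlt => /orP[/eqP <-|ii'] i'n; first exact: pair_le_refl.
apply: pair_le_trans (IH ii' (ltnW i'n)) _.
by have /andP[] := c_lt i' ltac:(by rewrite (leq_trans mi ii') i'n).
Qed.

(* A point below the start of a chain, of the opposite parity, extends it
   to a longer chain (of the other starting type when m = 0). *)
Lemma chain_extend_below m n c p : alt_chain i1 k1 i2 k2 m n c -> in_box p ->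
  pair_lt p (c m) -> even_pair p = odd m ->
  exists m' n' c', alt_chain i1 k1 i2 k2 m' n' c' /\ n' - m' = (n - m).+1.
Proof.
move=> [m1 [mn [c_box c_lt]]] /andP[p1 p2] p_lt p_par.
case: m m1 mn c_box c_lt p_lt p_par => [|[|//]] _ mn c_box c_lt p_lt p_par.
- exists 1, n.+2, (fun i => if i is i'.+2 then c i' else p).
  split; last by rewrite subn0.
  do 2 (split => //); split.
  + case => [|[|i]] //= Hi.
    by have [-> -> ->] := c_box i Hi; rewrite negbK.
  + by case => [|[|i]] //= Hi; apply: c_lt.
- exists 0, n, (fun i => if i is 0 then p else c i).
  split; last by rewrite subn0 subn1 prednK.
  do 2 (split => //); split.
  + by case => [|i] //= Hi; move: (c_box i.+1 Hi); rewrite /= !negbK.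
  + by case => [|i] //= Hi; apply: c_lt.
Qed.

Section Longest.
Variables m n : nat.
Hypothesis mn_meet : meet_type i1 k1 i2 k2 m n.

Lemma bottom_parity : even_pair (i1, i2) = ~~ odd m.
Proof.
have [[c Hc] c_longest] := mn_meet; have [_ [mn [c_box _]]] := Hc.
have [c1 c2 c_par] := c_box m ltac:(by rewrite leqnn mn).
apply/eqP; apply: contraT => wrong_par.
have bot_par : even_pair (i1, i2) = odd m.
  by move: wrong_par; case: (even_pair _); case: (odd m).
have bot_lt : pair_lt (i1, i2) (c m).
  by apply: parity_change_lt; [apply: bottom_le; rewrite /in_box c1 c2 | rewrite c_par].
have [m' [n' [c' [Hc' len]]]] :=
  chain_extend_below Hc bottom_in_box bot_lt bot_par.
by have := c_longest _ _ _ Hc'; rewrite len ltnn.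
Qed.

Definition chain_to (p : nat * nat) (j : nat) : Prop :=
  exists c, alt_chain i1 k1 i2 k2 m j c /\ c j = p.

Lemma chain_to_top_le p j : chain_to p j -> j <= n.
Proof.
have [[c0 [_ [mn _]]] c_longest] := mn_meet.
by move=> [c [Hc _]]; have := c_longest _ _ _ Hc; rewrite leq_sub2rE.
Qed.

(* Every point of the box tops some chain: p alone, or the bottom then p. *)
Lemma chain_to_exists p : in_box p -> exists j, chain_to p j.
Proof.
have m1 : m <= 1 by case: mn_meet => [[c [m1 _]] _].
move=> p_box; move: (p_box) => /andP[p1 p2].
case p_par: (even_pair p == ~~ odd m).
  exists m, (fun _ => p); split => //; do 2 (split => //); split.
  + move=> i /andP[mi im]; have -> : i = m by apply/eqP; rewrite eqn_leq mi im.
    by rewrite p1 p2 (eqP p_par).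
  + by move=> i /andP[mi im]; move: (leq_ltn_trans mi im); rewrite ltnn.
exists m.+1, (fun i => if i == m then (i1, i2) else p); split; last first.
  by rewrite eqn_leq ltnn.
move: bottom_in_box => /andP[b1 b2].
do 2 (split => //); split.
+ move=> i /andP[mi im]; case: eqP => [->|i_neq_m].
    by rewrite b1 b2 bottom_parity.
  have -> : i = m.+1.
    by apply/eqP; rewrite eqn_leq im ltn_neqAle mi andbT eq_sym; apply/eqP.
  by rewrite p1 p2 oddS negbK; move/negbT: p_par; case: (even_pair p); case: (odd m).
+ move=> i /andP[mi im]; have -> : i = m by apply/eqP; rewrite eqn_leq mi -ltnS im.
  rewrite eqxx (gtn_eqF (ltnSn m)); apply: parity_change_lt; first exact: bottom_le.
  by rewrite bottom_parity; move/negbT: p_par; rewrite eq_sym.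
Qed.

(* A chain topped by p yields one at least as long topped by any q >= p in
   the box: replace the top by q, or append q. *)
Lemma chain_to_extend p q j : chain_to p j -> in_box q -> pair_le p q ->
  exists j', j <= j' /\ chain_to q j'.
Proof.
move=> [c [[m1 [mj [c_box c_lt]]] cj]] q_box pq; move: (q_box) => /andP[q1 q2].
have p_par : even_pair p = ~~ odd j.
  by have [_ _] := c_box j ltac:(by rewrite mj leqnn); rewrite cj.
case par_eq: (even_pair q == even_pair p).
  exists j; split => //; exists (fun i => if i == j then q else c i).
  split; last by rewrite eqxx.
  do 2 (split => //); split.
  + move=> i Hi; case: eqP => [->|_]; last exact: c_box.
    by rewrite q1 q2 (eqP par_eq) p_par.
  + move=> i /andP[mi ij]; rewrite (ltn_eqF ij).
    have c_lt_i : pair_lt (c i) (c i.+1) by apply: c_lt; rewrite mi ij.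
    case: eqP => [Ei|_] //; apply: pair_lt_le_trans pq; by rewrite -cj -Ei.
exists j.+1; split => //; exists (fun i => if i == j.+1 then q else c i).
split; last by rewrite eqxx.
split => //; split; first exact: leqW mj; split.
+ move=> i /andP[mi ij]; case: eqP => [->|i_neq].
    rewrite q1 q2; split => //; move/negbT: par_eq; rewrite p_par /=.
    by case: (even_pair q); case: (odd j).
  by apply: c_box; rewrite mi -ltnS ltn_neqAle ij andbT; apply/eqP.
+ move=> i /andP[mi ij]; rewrite (ltn_eqF ij); case: eqP => [[Ei]|i_neq].
    by rewrite Ei cj; apply: parity_change_lt => //; rewrite eq_sym par_eq.
  apply: c_lt; rewrite mi ltn_neqAle -ltnS ij andbT.
  by apply/eqP => Ei; apply: i_neq; rewrite Ei.
Qed.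

Lemma max_witness (P : nat -> Prop) b : (exists j, P j) -> (forall j, P j -> j <= b) ->
  exists j, P j /\ forall j', P j' -> j' <= j.
Proof.
elim: b => [|b IH] [j Pj] P_bound.
  by exists j; split => // j' Pj'; rewrite (leq_trans (P_bound _ Pj')).
case: (classic (P b.+1)) => [Pb|not_Pb]; first by exists b.+1; split => // j'; apply: P_bound.
apply: IH; first by exists j.
move=> j' Pj'; have := P_bound _ Pj'; rewrite leq_eqVlt => /orP[/eqP E|//].
by rewrite E in Pj'.
Qed.

(* The rank of a point: the largest top index of a chain ending in it. *)
Lemma meet_rank : exists R : nat * nat -> nat, forall p, in_box p ->
  [/\ m <= R p <= n, ~~ odd (R p) = even_pair p &
      forall q, in_box q -> pair_le p q -> R p <= R q].
Proof.
have rank p : exists j, in_box p -> chain_to p j /\ forall j', chain_to p j' -> j' <= j.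
  case: (boolP (in_box p)) => p_box; last by exists 0.
  have [j Hj] := max_witness (chain_to_exists p_box) (@chain_to_top_le p).
  by exists j.
pose R p := proj1_sig (constructive_indefinite_description _ (rank p)).
have R_spec p : in_box p -> chain_to p (R p) /\ forall j', chain_to p j' -> j' <= R p.
  exact: (proj2_sig (constructive_indefinite_description _ (rank p))).
exists R => p p_box; have [[c [[_ [mR [c_box _]]] cR]] R_max] := R_spec p p_box.
split.
- by rewrite mR (chain_to_top_le (proj1 (R_spec p p_box))).
- by have [_ _] := c_box (R p) ltac:(by rewrite mR leqnn); rewrite cR => ->.
- move=> q q_box pq; have [j' [Rj' Cq]] := chain_to_extend (proj1 (R_spec p p_box)) q_box pq.
  exact: leq_trans Rj' ((R_spec q q_box).2 _ Cq).
Qed.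

End Longest.
End MeetType.

Lemma wadge_le_eqvl A B (L L' : word A -> Prop) (M : word B -> Prop) :
  (forall w, L w <-> L' w) -> wadge_le L' M -> wadge_le L M.
Proof. by move=> E [f [f_cont f_red]]; exists f; split => // w; rewrite E. Qed.

Lemma wadge_le_eqvr A B (L : word A -> Prop) (M M' : word B -> Prop) :
  (forall w, M w <-> M' w) -> wadge_le L M' -> wadge_le L M.
Proof. by move=> E [f [f_cont f_red]]; exists f; split => // w; rewrite E. Qed.

Lemma forall_ord2 (P : 'I_2 -> Prop) : (forall j, P j) <-> P ord0 /\ P ord_max.
Proof.
split => [H | [P0 P1] [[|[|//]] j_lt]]; first by split.
- by rewrite (_ : Ordinal j_lt = ord0) //; apply: val_inj.
- by rewrite (_ : Ordinal j_lt = ord_max) //; apply: val_inj.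
Qed.

Definition coord2 i1 k1 i2 k2 (x : letter i1 k1 * letter i2 k2) (j : 'I_2) : nat :=
  if val j == 0 then val x.1 else val x.2.

Lemma prodL_all_even i1 k1 i2 k2 (w : word (letter i1 k1 * letter i2 k2)) :
  prodL (@parityL i1 k1) (@parityL i2 k2) w <-> all_even_limsup (@coord2 i1 k1 i2 k2) w.
Proof. by rewrite /all_even_limsup forall_ord2. Qed.

Lemma meet_product_equiv i1 k1 i2 k2 : i1 <= k1 -> i2 <= k2 ->
  forall m n, meet_type i1 k1 i2 k2 m n ->
  wadge_eq (prodL (@parityL i1 k1) (@parityL i2 k2)) (@parityL m n).
Proof.
move=> ik1 ik2 m n mn_meet; have [[c c_chain] _] := mn_meet.
have mn : m <= n by case: c_chain => [_ [mn _]].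
pose lo (j : 'I_2) := if val j == 0 then i1 else i2.
pose hi (j : 'I_2) := if val j == 0 then k1 else k2.
have box_pair (v : 'I_2 -> nat) :
    (forall j, lo j <= v j <= hi j) -> in_box i1 k1 i2 k2 (v ord0, v ord_max).
  by move=> Hv; rewrite /in_box (Hv ord0) (Hv ord_max).
have [R R_spec] := meet_rank ik1 ik2 mn_meet.
split.
- apply: wadge_le_eqvl (@prodL_all_even _ _ _ _) _.
  apply: (@rank_reduction _ 2 (@coord2 i1 k1 i2 k2) lo hi m n mn
            (fun v => R (v ord0, v ord_max))) => //.
  + move=> x j; rewrite /coord2 /lo /hi.
    by case: (val j == 0); [exact: valP x.1 | exact: valP x.2].
  + by move=> v /box_pair /R_spec [].
  + move=> v v' /box_pair Hv /box_pair Hv' vv'.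
    by have [_ _ ->] := R_spec _ Hv; rewrite // /pair_le !vv'.
  + move=> v /box_pair /R_spec [_ -> _].
    by rewrite forall_ord2 /even_pair; split => [/andP[] | [-> ->]].
- apply: wadge_le_eqvr (@prodL_all_even _ _ _ _) _.
  have [_ [_ [c_box _]]] := c_chain.
  pose c2 i := (to_letter ik1 (c i).1, to_letter ik2 (c i).2).
  have coord_c2 i j :
      m <= i <= n -> coord2 (c2 i) j = if val j == 0 then (c i).1 else (c i).2.
    by move=> Hi; have [? ? _] := c_box i Hi; rewrite /coord2 /= !val_to_letter.
  apply: (@chain_reduction _ 2 (@coord2 i1 k1 i2 k2) m n c2).
  + move=> i i' j mi ii' i'n.
    rewrite !coord_c2 ?mi ?i'n ?(leq_trans mi ii') ?(leq_trans ii' i'n) //.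
    by have /andP[le1 le2] := chain_mono c_chain mi ii' i'n; case: (val j == 0).
  + move=> i Hi; rewrite forall_ord2 !coord_c2 //=; have [_ _ <-] := c_box i Hi.
    by rewrite /even_pair; split => [[-> ->] | /andP[]].
Qed.

Section KFold.
Variable k : nat.
Implicit Types v : 'I_k -> nat.

Lemma sum_ltn (I : finType) (F G : I -> nat) j0 :
  (forall j, F j <= G j) -> F j0 < G j0 -> \sum_j F j < \sum_j G j.
Proof.
move=> FG FG_j0; rewrite (bigD1 j0) //= [X in _ < X](bigD1 j0) //=.
apply: (@leq_ltn_trans (F j0 + \sum_(j | j != j0) G j)); last by rewrite ltn_add2r.
by rewrite leq_add2l; apply: leq_sum => j _.
Qed.

Definition twos v : nat := \sum_(j < k) (v j == 2).

Definition kfold_rank v : nat := 2 * twos v + [exists j, v j == 1].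

Lemma twos_le v : twos v <= k.
Proof.
rewrite -[k]card_ord -sum1_card; apply: leq_sum => j _; by case: (v j == 2).
Qed.

Lemma twos_lt v j0 : v j0 != 2 -> twos v < k.
Proof.
move=> v_j0; rewrite -[k]card_ord -sum1_card.
apply: (@sum_ltn _ (fun j => nat_of_bool (v j == 2)) (fun _ => 1) j0).
- by move=> j; case: (v j == 2).
- by rewrite (negbTE v_j0).
Qed.

Lemma kfold_rank_range v : kfold_rank v <= 2 * k.
Proof.
rewrite /kfold_rank; case: existsP => [[j /eqP v_j]|_]; last first.
  by rewrite addn0 leq_mul2l twos_le orbT.
have twos_lt_k : twos v < k by apply: (@twos_lt _ j); rewrite v_j.
by rewrite addn1 ltn_pmul2l.
Qed.

Lemma kfold_rank_mono v v' : (forall j, v' j <= 2) -> (forall j, v j <= v' j) ->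
  kfold_rank v <= kfold_rank v'.
Proof.
move=> v'_box vv'.
have two_le j : (v j == 2) <= (v' j == 2).
  by case: eqP => // v_j; rewrite eqn_leq v'_box -v_j vv'.
have twos_vv' : twos v <= twos v' by apply: leq_sum => j _; exact: two_le.
case: (ltngtP (twos v) (twos v')) => [lt_vv'|/(leq_ltn_trans twos_vv')|eq_vv'].
- apply: (@leq_trans (2 * (twos v).+1)).
    by rewrite mulnSr leq_add2l; case: existsP.
  by apply: leq_trans (leq_addr _ _); rewrite leq_mul2l lt_vv' orbT.
- by rewrite ltnn.
(* equally many 2's: every 1 of v stays a 1 in v' *)
rewrite /kfold_rank eq_vv' leq_add2l.
case: (@existsP _ (fun j => v j == 1)) => [[j /eqP v_j]|] //.
rewrite lt0b; apply/existsP; exists j.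
have v'_j_ne2 : v' j != 2.
  apply/eqP => v'_j.
  have : twos v < twos v'.
    apply: (@sum_ltn _ (fun j => nat_of_bool (v j == 2))
                       (fun j => nat_of_bool (v' j == 2)) j two_le).
    by rewrite v_j v'_j.
  by rewrite eq_vv' ltnn.
have := vv' j; have := v'_box j; rewrite v_j; move: v'_j_ne2.
by case: (v' j) => [|[|[|?]]].
Qed.

Lemma kfold_rank_parity v : (forall j, v j <= 2) ->
  (~~ odd (kfold_rank v) <-> forall j, ~~ odd (v j)).
Proof.
move=> v_box; rewrite /kfold_rank oddD oddM /=.
case: existsP => [[j /eqP v_j]|no_one] /=; split => //.
- by move/(_ j); rewrite v_j.
- move=> _ j; have := v_box j; case v_j: (v j) => [|[|[|?]]] //= _.
  by case: no_one; exists j; rewrite v_j.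
Qed.

Definition kfold_chain (i : nat) (j : 'I_k) : nat :=
  if j < i./2 then 2 else if j == i./2 :> nat then nat_of_bool (odd i) else 0.

Lemma kfold_chain_le2 i j : kfold_chain i j <= 2.
Proof. by rewrite /kfold_chain; case: ifP => //; case: ifP => //; case: (odd i). Qed.

Lemma kfold_chain_mono i i' j : i <= i' -> kfold_chain i j <= kfold_chain i' j.
Proof.
move=> ii'; rewrite /kfold_chain; have half_ii' := half_leq ii'.
case: ltnP => [j_lt|j_ge]; first by rewrite (leq_trans j_lt half_ii').
case: eqP => [j_half|_] //.
case: ltnP => [_|j_ge']; first by case: (odd i).
have j_half' : j = i'./2 :> nat by apply/eqP; rewrite eqn_leq j_ge' j_half half_ii'.
rewrite -j_half' eqxx.
move: ii'; rewrite -{1}(odd_double_half i) -{1}(odd_double_half i') -j_half -j_half' leq_add2r.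
by case: (odd i); case: (odd i').
Qed.

Lemma kfold_chain_parity i : i <= 2 * k ->
  ((forall j, ~~ odd (kfold_chain i j)) <-> ~~ odd i).
Proof.
move=> i_le; split => [all_even | i_even j]; last first.
  by rewrite /kfold_chain; case: ifP => //; case: ifP => //; rewrite (negbTE i_even).
apply/negP => i_odd.
have half_lt : i./2 < k.
  by move: i_le; rewrite -{1}(odd_double_half i) i_odd mul2n add1n ltn_double.
by have := all_even (Ordinal half_lt); rewrite /kfold_chain /= ltnn eqxx i_odd.
Qed.

End KFold.

Lemma kfold_product_equiv k : 1 <= k ->
  wadge_eq (@kprodL (letter 0 2) k (@parityL 0 2)) (@parityL 0 (2 * k)).
Proof.
move=> k_gt0; pose coord (x : {ffun 'I_k -> letter 0 2}) j := val (x j).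
have coord_box x j : 0 <= coord x j <= 2 by exact: valP (x j).
split.
- apply: (@rank_reduction _ k coord (fun _ => 0) (fun _ => 2) 0 (2 * k) (leq0n _)
            (@kfold_rank k)) => //.
  + by move=> v _; exact: kfold_rank_range.
  + by move=> v v' _ v'_box; apply: kfold_rank_mono.
  + by move=> v v_box; apply: kfold_rank_parity.
- pose c i := [ffun j : 'I_k => to_letter (isT : 0 <= 2) (kfold_chain i j)].
  have coord_c i j : coord (c i) j = kfold_chain i j.
    by rewrite /coord ffunE val_to_letter ?kfold_chain_le2.
  apply: (@chain_reduction _ k coord 0 (2 * k) c).
  + by move=> i i' j _ ii' _; rewrite !coord_c kfold_chain_mono.
  + move=> i /andP[_ i_le]; rewrite -(kfold_chain_parity i_le).
    by split => H j; [rewrite -coord_c | rewrite coord_c].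
Qed.

Theorem lemma8p2 :
  (forall i1 k1 i2 k2 : nat, i1 <= k1 -> i2 <= k2 ->
     forall m n : nat, meet_type i1 k1 i2 k2 m n ->
       wadge_eq (prodL (@parityL i1 k1) (@parityL i2 k2)) (@parityL m n)) /\
  (forall k : nat, 1 <= k ->
       wadge_eq (@kprodL (letter 0 2) k (@parityL 0 2)) (@parityL 0 (2 * k))).
Proof.
split.
- exact: meet_product_equiv.
- exact: kfold_product_equiv.
Qed.
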